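(* Let $n\in\mathbb{N}^*$ and let $c\in\mathfrak{S}_{n+1}$ be a Coxeter element. The map $\Phi_c$, which sends $\boldsymbol\pi=(\pi^k)_{1\le k\le n}\in\mathcal{ST}(c)$ to the filling of $\boldsymbol\lambda(c)$ whose value at the box $\langle k,\delta\rangle_{\boldsymbol\lambda(c)}$ is $\pi^k_\delta$ (the $\delta$-th part of $\pi^k$, zero if $\delta>\ell(\pi^k)$), is a bijection from $\mathcal{ST}(c)$ onto $\mathrm{RPP}(\boldsymbol\lambda(c))$.
   Context: Coxeter element of $\mathfrak{S}_{n+1}$: product of $s_1,\dots,s_n$ ($s_i=(i,i+1)$), each exactly once; it is a long cycle $(c_1=1<c_2<\dots<c_m=n+1>c_{m+1}>\dots>c_{n+1})$, with $\mathbf L_c=\{c_2,\dots,c_{m-1}\}$, $\mathbf R_c=\{c_{m+1},\dots,c_{n+1}\}$. With $\mathbf L=\mathbf L_c\cup\{1\}=\{\ell_1<\dots<\ell_p\}$ and $\mathbf R=\mathbf R_c\cup\{n+1\}$, $\boldsymbol\lambda(c)$ is the partition with parts $\#\{r\in\mathbf R:\ell_i<r\}$. For a partition $\lambda$: $\mathrm{Fer}(\lambda)=\{(i,j):j\le\lambda_i\}$; $D_k(\lambda)=\{(i,j)\in\mathrm{Fer}(\lambda):\lambda_1+i-j=k\}$; $\delta_k=\max\{\min(i,j):(i,j)\in D_k(\lambda)\}$; the box $(i,j)\in D_k(\lambda)$ has coordinates $\langle k,\delta\rangle_\lambda$ with $\delta=\delta_k-\min(i,j)+1$. $\mathrm{RPP}(\lambda)$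 is the set of maps $\mathrm{Fer}(\lambda)\to\mathbb{N}$ weakly increasing for the componentwise order. Storability: a pair of partitions $(\lambda,\mu)$ (padded with zeros) is storable if $\lambda_i\ge\mu_i\ge\lambda_{i+1}$ for all $i\ge1$. A triple $(\lambda,\mu,\nu)$ is $(\boxplus,\boxplus)$-storable if $(\lambda,\mu),(\nu,\mu)$ are storable; $(\boxplus,\boxminus)$ if $(\lambda,\mu),(\mu,\nu)$ are; $(\boxminus,\boxplus)$ if $(\mu,\lambda),(\nu,\mu)$ are; $(\boxminus,\boxminus)$ if $(\mu,\lambda),(\mu,\nu)$ are. For $\boldsymbol\pi=(\pi^1,\dots,\pi^n)$ set $\pi^0=\pi^{n+1}=(0)$; $\boldsymbol\pi$ is $X$-storable at $i$ if $(\pi^{i-1},\pi^i,\pi^{i+1})$ is. With $\mathbf R[-1]=\{r-1:r\in\mathbf R\}$, $\boldsymbol\pi\in\mathcal{ST}(c)$ means that for each $i\in\{1,\dots,n\}$: $(\boxplus,\boxplus)$-storable at $i$ if $i\notin\mathbf L\cup\mathbf R[-1]$; $(\boxplus,\boxminus)$ at $i$ if $i\in\mathbf R[-1]\setminus\mathbf L$; $(\boxminus,\boxplus)$ at $i$ if $i\in\mathbf L\setminus\mathbf R[-1]$; $(\boxminus,\boxminus)$ at $i$ if $i\in\mathbf L\cap\mathbf R[-1]$; and $\pi^k=(0)$ for $k\notin\{\min\mathbf L,\dots,\max\mathbf R\}$. (For such $\boldsymbol\pi$, $\ell(\pi^k)\le\#D_k(\boldsymbol\lambda(c))$, so $\Phi_c$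 is well defined.) *)

From mathcomp Require Import all_boot all_order all_fingroup.
Set Implicit Arguments. Unset Strict Implicit. Unset Printing Implicit Defensive.

(* Points 1..n+1 of the paper are the ordinals 0..n of 'I_(n.+1). *)

(* s_(i+1) = (i+1, i+2) in 1-based notation, for i : 'I_n *)
Definition simple_tr (n : nat) (i : 'I_n) : 'S_(n.+1) :=
  tperm (widen_ord (leqnSn n) i) (lift ord0 i).

Definition coxeter_element (n : nat) (c : 'S_(n.+1)) : Prop :=
  exists sigma : 'S_n, c = (\prod_(i < n) simple_tr (sigma i))%g.

(* c acting on the 1-based points 1..n+1 *)
Definition cnat (n : nat) (c : 'S_(n.+1)) (x : nat) : nat :=
  (val (c (inord x.-1))).+1.

(* L = L_c u {1}: the points c^k(1) visited before reaching n+1 *)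
Definition inL (n : nat) (c : 'S_(n.+1)) (x : nat) : bool :=
  [exists k : 'I_(n.+2), (iter k (cnat c) 1 == x) &&
     [forall j : 'I_(n.+2), (j <= k) ==> (iter j (cnat c) 1 != n.+1)]].

(* R = R_c u {n+1}: the points c^k(n+1) visited before coming back to 1 *)
Definition inR (n : nat) (c : 'S_(n.+1)) (x : nat) : bool :=
  [exists k : 'I_(n.+2), (iter k (cnat c) n.+1 == x) &&
     [forall j : 'I_(n.+2), ((0 < j) && (j <= k)) ==> (iter j (cnat c) n.+1 != 1)]].

Definition Lseq (n : nat) (c : 'S_(n.+1)) : seq nat :=
  [seq x <- iota 1 n.+1 | inL c x].
Definition Rseq (n : nat) (c : 'S_(n.+1)) : seq nat :=
  [seq x <- iota 1 n.+1 | inR c x].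

Definition lambda_c (n : nat) (c : 'S_(n.+1)) : seq nat :=
  [seq count (fun r => inR c r && (l < r)) (iota 1 n.+1) | l <- Lseq c].

(* A partition is a weakly decreasing list of positive parts; the zero
   partition (0) is [::]; lambda_i = nth 0 lambda (i-1) (padding by zeros). *)
Definition is_partition (s : seq nat) : bool :=
  sorted geq s && all (fun x => 0 < x) s.

Definition in_Fer (la : seq nat) (i j : nat) : bool :=
  (0 < i) && (0 < j) && (j <= nth 0 la i.-1).

(* RPP(la): fillings of Fer(la) weakly increasing for the componentwise order;
   a filling is encoded as a function nat -> nat -> nat vanishing off Fer(la). *)
Definition is_RPP (la : seq nat) (f : nat -> nat -> nat) : Prop :=
  (forall i j, ~~ in_Fer la i j -> f i j = 0) /\
  (forall i j i' j', in_Fer la i j -> in_Fer la i' j' ->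
       i <= i' -> j <= j' -> f i j <= f i' j').

Definition diag_index (la : seq nat) (i j : nat) : nat := nth 0 la 0 + i - j.

Definition delta_k (la : seq nat) (k : nat) : nat :=
  \max_(i < size la) \max_(j < nth 0 la i | diag_index la i.+1 j.+1 == k)
      minn i.+1 j.+1.

Definition box_k (la : seq nat) (i j : nat) : nat := diag_index la i j.
Definition box_delta (la : seq nat) (i j : nat) : nat :=
  delta_k la (diag_index la i j) - minn i j + 1.

Definition storable (la mu : seq nat) : Prop :=
  forall i : nat, nth 0 mu i <= nth 0 la i /\ nth 0 la i.+1 <= nth 0 mu i.

Definition st_pp (la mu nu : seq nat) : Prop := storable la mu /\ storable nu mu.
Definition st_pm (la mu nu : seq nat) : Prop := storable la mu /\ storable mu nu.
Definition st_mp (la mu nu : seq nat) : Prop := storable mu la /\ storable nu mu.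
Definition st_mm (la mu nu : seq nat) : Prop := storable mu la /\ storable mu nu.

(* pi^k for pi = (pi^1,...,pi^n), with pi^0 = pi^{n+1} = (0) *)
Definition pi_at (n : nat) (pi : n.-tuple (seq nat)) (k : nat) : seq nat :=
  if k is k'.+1 then nth [::] pi k' else [::].

Definition in_ST (n : nat) (c : 'S_(n.+1)) (pi : n.-tuple (seq nat)) : Prop :=
  (forall k, 1 <= k <= n -> is_partition (pi_at pi k)) /\
  (forall i, 1 <= i <= n ->
     let t := (pi_at pi i.-1, pi_at pi i, pi_at pi i.+1) in
     let iL := inL c i in
     let iR1 := inR c i.+1 in   (* i in R[-1] *)
     (~~ iL -> ~~ iR1 -> st_pp t.1.1 t.1.2 t.2) /\
     (~~ iL -> iR1 -> st_pm t.1.1 t.1.2 t.2) /\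
     (iL -> ~~ iR1 -> st_mp t.1.1 t.1.2 t.2) /\
     (iL -> iR1 -> st_mm t.1.1 t.1.2 t.2)) /\
  (forall k, 1 <= k <= n ->
     ~~ (head 0 (Lseq c) <= k <= last 0 (Rseq c)) -> pi_at pi k = [::]).

Definition Phi_c (n : nat) (c : 'S_(n.+1)) (pi : n.-tuple (seq nat))
    : nat -> nat -> nat :=
  fun i j =>
    let la := lambda_c c in
    if in_Fer la i j then
      nth 0 (pi_at pi (box_k la i j)) (box_delta la i j).-1
    else 0.

From mathcomp Require Import all_boot all_order all_fingroup.
From mathcomp Require Import zify.
From Stdlib Require Import FunctionalExtensionality.
Set Implicit Arguments. Unset Strict Implicit. Unset Printing Implicit Defensive.

(* A Coxeter element c is an (n+1)-cycle, so L and R are the two arcs of c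
   between 1 and n+1 and they partition {1, ..., n+1}.  With nL k the number of
   elements of L in [1, k] and lambda_1 = #R, the k-th diagonal of lambda(c) is
   the segment of boxes (nL k - t, lambda_1 + nL k - k - t), along which Phi_c
   writes pi^k.  The storability conditions defining ST(c) say exactly that
   consecutive pi^k and pi^(k+1) interlace, the larger one being pi^(k+1) iff
   k+1 is in L; read along the diagonals, this is monotonicity of the filling
   under one step down and one step right, i.e. the RPP condition.
   Interlacing also bounds the length of pi^k by the length of the k-th
   diagonal, so pi is recovered from Phi_c pi; conversely the partitions read
   along the diagonals of any reverse plane partition are storable. *)

(** * Coxeter elements are long cycles *)

Lemma simple_tr_le n (a e : 'I_n) (x : 'I_n.+1) :
  a != e -> (simple_tr a x <= e) = (x <= e).
Proof.
move=> /eqP ae; have {}ae : (a : nat) <> e by move/val_inj.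
by rewrite /simple_tr; case: tpermP => [->|->|//] /=; rewrite /bump /=; lia.
Qed.

Lemma prod_simple_tr_le n (r : seq 'I_n) (e : 'I_n) (x : 'I_n.+1) :
  e \notin r -> ((\prod_(a <- r) simple_tr a)%g x <= e) = (x <= e).
Proof.
elim: r x => [|a r IH] x; first by rewrite big_nil perm1.
by rewrite inE negb_or big_cons permM => /andP [ea er]; rewrite IH // simple_tr_le // eq_sym.
Qed.

Lemma porbit_le n (s : 'S_n) (e : nat) :
  (forall x, (s x <= e) = (x <= e)) ->
  forall x y, y \in porbit s x -> (y <= e) = (x <= e).
Proof.
move=> se x y /porbitP [i ->]; elim: i => [|i IH]; first by rewrite expg0 perm1.
by rewrite expgSr permM se.
Qed.

Lemma card_porbits1 n : #|porbits (1 : 'S_n)%g| = n.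
Proof.
rewrite card_imset ?card_ord // => x y E.
have /porbitP [i ->] : x \in porbit 1 y by rewrite -E porbit_id.
by rewrite expg1n perm1.
Qed.

(* Each new simple transposition merges two cycles, since no orbit of the
   previous product crosses the gap it closes. *)
Lemma card_porbits_prod_simple_tr n (r : seq 'I_n) : uniq r ->
  #|porbits (\prod_(a <- r) simple_tr a)%g| + size r = n.+1.
Proof.
elim: r => [_|a r IH /andP [ar ur]]; first by rewrite big_nil addn0 card_porbits1.
rewrite big_cons; set s := (\prod_(b <- r) simple_tr b)%g.
have apart : widen_ord (leqnSn n) a \notin porbit s (lift ord0 a).
  apply/negP => /(porbit_le (fun x => prod_simple_tr_le x ar)) /=.
  by rewrite /bump /= leqnn add1n ltnn.
have neq : widen_ord (leqnSn n) a != lift ord0 a.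
  by apply/negP => /eqP /(congr1 val) /=; rewrite /bump /= add1n => /n_Sn.
have := porbits_mul_tperm s (widen_ord (leqnSn n) a) (lift ord0 a).
rewrite apart neq -/(simple_tr a) /= -addnn addnA => /eqP.
by rewrite eqn_add2r addn1 => /eqP merge; rewrite -[RHS](IH ur) -merge addSnnS.
Qed.

Lemma coxeter_element_porbit n (c : 'S_n.+1) :
  coxeter_element c -> porbit c ord0 = [set: 'I_n.+1].
Proof.
case=> sigma ->; set c' := (\prod_(i < n) simple_tr (sigma i))%g.
have : #|porbits c'| == 1.
  have sz : size (index_enum 'I_n) = n by rewrite [index_enum _]unlock -enumT size_enum_ord.
  have := @card_porbits_prod_simple_tr n (map sigma (index_enum 'I_n)).
  rewrite big_map -/c' map_inj_uniq ?index_enum_uniq; last exact: perm_inj.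
  by rewrite size_map sz => /(_ isT); lia.
case/cards1P => P HP; apply/setP => y; rewrite inE.
have : porbit c' y \in porbits c' by apply: imset_f.
have : porbit c' ord0 \in porbits c' by apply: imset_f.
by rewrite HP !inE => /eqP -> /eqP <-; rewrite porbit_id.
Qed.

Section CoxeterCycle.
Variables (n : nat) (c : 'S_n.+1).
Hypothesis n_gt0 : 0 < n.
Hypothesis c_cycle : porbit c ord0 = [set: 'I_n.+1].

Let card_porbit : #|porbit c ord0| = n.+1.
Proof. by rewrite c_cycle cardsT card_ord. Qed.

Let mem_traject y : y \in traject c ord0 n.+1.
Proof. by have := porbit_traject c ord0 y; rewrite card_porbit c_cycle inE. Qed.

Definition cycle_index (y : 'I_n.+1) := index y (traject c ord0 n.+1).

Lemma cycle_index_lt y : cycle_index y < n.+1.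
Proof. by rewrite -[X in _ < X](size_traject c ord0) index_mem mem_traject. Qed.

Lemma iter_cycle_index y : iter (cycle_index y) c ord0 = y.
Proof. by rewrite -(nth_traject c (cycle_index_lt y)) nth_index ?mem_traject. Qed.

Lemma cycle_index_iter k : k < n.+1 -> cycle_index (iter k c ord0) = k.
Proof.
move=> lt_k; rewrite /cycle_index -(nth_traject c lt_k) index_uniq ?size_traject //.
by have := uniq_traject_porbit c ord0; rewrite card_porbit.
Qed.

Lemma cycle_index0 : cycle_index ord0 = 0.
Proof. by rewrite /cycle_index /= ?eqxx. Qed.

Lemma iter_cycle_order : iter n.+1 c ord0 = ord0.
Proof. by have := iter_porbit c ord0; rewrite card_porbit. Qed.

Lemma iter_cnat k (y : 'I_n.+1) : iter k (cnat c) (val y).+1 = (val (iter k c y)).+1.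
Proof. by elim: k => //= k ->; rewrite /cnat inord_val. Qed.

Let iter_cnat1 k : iter k (cnat c) 1 = (val (iter k c ord0)).+1.
Proof. exact: iter_cnat k ord0. Qed.

(* With m the position of n+1 on the cycle through 1, L and R are the arcs
   of the cycle before and after position m. *)
Local Notation m := (cycle_index ord_max).

Lemma inL_cycle y : inL c (val y).+1 = (cycle_index y < m).
Proof.
have lt_y := cycle_index_lt y; have lt_m := cycle_index_lt ord_max.
apply/existsP/idP => [[k /andP [/eqP Ek /forallP before]] | lt_ym].
  rewrite iter_cnat1 in Ek; case: Ek => /val_inj Ek.
  have lt_km : k < m.
    rewrite ltnNge; apply/negP => le_mk.
    have lt_m2 : m < n.+2 by lia.
    have := before (Ordinal lt_m2); rewrite le_mk /= iter_cnat1.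
    by rewrite iter_cycle_index eqxx.
  by rewrite -Ek cycle_index_iter //; lia.
have lt_y2 : cycle_index y < n.+2 by lia.
exists (Ordinal lt_y2); rewrite /= iter_cnat1 iter_cycle_index eqxx /=.
apply/forallP => j; apply/implyP => le_jy; rewrite iter_cnat1.
apply/negP => /eqP [] Ej.
have : iter j c ord0 = ord_max by apply/val_inj.
by move/(congr1 cycle_index); rewrite cycle_index_iter; lia.
Qed.

Let iter_cnat_last k : iter k (cnat c) n.+1 = (val (iter (k + m) c ord0)).+1.
Proof. by rewrite iterD iter_cycle_index -iter_cnat. Qed.

Lemma inR_cycle y : inR c (val y).+1 = (m <= cycle_index y).
Proof.
have lt_y := cycle_index_lt y; have lt_m := cycle_index_lt ord_max.
apply/existsP/idP => [[k /andP [/eqP Ek /forallP before]] | le_my].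
  rewrite iter_cnat_last in Ek; case: Ek => /val_inj Ek.
  have lt_km : k + m < n.+1.
    rewrite ltnNge; apply/negP => le_nkm.
    have lt_j : n.+1 - m < n.+2 by lia.
    have := before (Ordinal lt_j); rewrite /= iter_cnat_last.
    have -> : n.+1 - m + m = n.+1 by lia.
    by rewrite iter_cycle_order /= implybF; lia.
  by rewrite -Ek cycle_index_iter //; lia.
have lt_k : cycle_index y - m < n.+2 by lia.
exists (Ordinal lt_k); rewrite /= iter_cnat_last subnK // iter_cycle_index eqxx /=.
apply/forallP => j; apply/implyP => /andP [j_gt0 le_jk]; rewrite iter_cnat_last.
apply/negP => /eqP [] Ej.
have : iter (j + m) c ord0 = ord0 by apply/val_inj.
by move/(congr1 cycle_index); rewrite cycle_index_iter ?cycle_index0; lia.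
Qed.

Lemma inR_inL x : 1 <= x <= n.+1 -> inR c x = ~~ inL c x.
Proof.
case: x => // x /= lt_x; have -> : x = val (Ordinal lt_x) by [].
by rewrite inL_cycle inR_cycle leqNgt.
Qed.

Lemma inL_1 : inL c 1.
Proof.
rewrite -[1]/((val (@ord0 n)).+1) inL_cycle cycle_index0 lt0n.
apply/eqP => /(congr1 (fun k => iter k c ord0)); rewrite iter_cycle_index /=.
by move/(congr1 val) => /=; lia.
Qed.

Lemma inR_last : inR c n.+1.
Proof. by rewrite -[n.+1]/((val (@ord_max n)).+1) inR_cycle. Qed.
End CoxeterCycle.

(** * Ferrers diagrams, storability and positive prefixes *)

Lemma in_Fer_down (la : seq nat) i j i' j' : sorted geq la ->
  in_Fer la i' j' -> 0 < i <= i' -> 0 < j <= j' -> in_Fer la i j.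
Proof.
rewrite /in_Fer => sorted_la /andP [/andP [i'_gt0 j'_gt0] le_j'].
move=> /andP [-> le_ii'] /andP [-> le_jj'] /=.
have [lt_i'|ge_i'] := ltnP i'.-1 (size la); last by move: le_j'; rewrite nth_default //; lia.
apply: (leq_trans le_jj' (leq_trans le_j' _)).
have geq_trans : transitive geq by move=> b a d /= ba db; apply: leq_trans db ba.
by apply: (sorted_leq_nth geq_trans leqnn) => //=; rewrite ?inE; lia.
Qed.

Lemma is_RPP_adj (la : seq nat) (g : nat -> nat -> nat) : sorted geq la ->
  (forall i j, ~~ in_Fer la i j -> g i j = 0) ->
  (forall i j, in_Fer la i.+1 j -> g i j <= g i.+1 j) ->
  (forall i j, in_Fer la i j.+1 -> g i j <= g i j.+1) ->
  is_RPP la g.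
Proof.
move=> sorted_la g0 g_down g_right; split => // i j i' j' F F' le_ii' le_jj'.
have [i_gt0 j_gt0] : 0 < i /\ 0 < j by move: F => /andP [/andP [-> ->]].
have j'_gt0 : 0 < j' by lia.
have F_down a b : a < i' -> b < j' -> in_Fer la a.+1 b.+1.
  by move=> ? ?; apply: (in_Fer_down sorted_la F'); lia.
have row d : j + d <= j' -> g i j <= g i (j + d).
  elim: d => [|d IH] le_d; first by rewrite addn0.
  apply: leq_trans (IH _) _; first lia.
  by rewrite addnS; apply: g_right; rewrite -[i]prednK //; apply: F_down; lia.
have col d : i + d <= i' -> g i j' <= g (i + d) j'.
  elim: d => [|d IH] le_d; first by rewrite addn0.
  apply: leq_trans (IH _) _; first lia.
  by rewrite addnS; apply: g_down; rewrite -[j']prednK //; apply: F_down; lia.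
apply: leq_trans (row (j' - j) _) _; first lia.
by rewrite subnKC //; have := col (i' - i); rewrite subnKC //; apply.
Qed.

Lemma RPP_le (la : seq nat) (f : nat -> nat -> nat) i j i' j' : is_RPP la f ->
  i <= i' -> j <= j' -> (in_Fer la i j -> in_Fer la i' j') -> f i j <= f i' j'.
Proof.
case=> f0 f_mono le_ii' le_jj' FF'.
by have [F|/f0 ->] := boolP (in_Fer la i j); first exact: f_mono (FF' F) le_ii' le_jj'.
Qed.

Lemma iota1S x : iota 1 x.+1 = rcons (iota 1 x) x.+1.
Proof. by have := iotaD 1 x 1; rewrite addn1 => ->; rewrite cats1 add1n. Qed.

Lemma nth_filter_iota (P : pred nat) N a i : i < count P (iota a N) ->
  [/\ a <= nth 0 (filter P (iota a N)) i < a + N, P (nth 0 (filter P (iota a N)) i)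
    & count P (iota a (nth 0 (filter P (iota a N)) i - a)) = i].
Proof.
elim: N a i => [|N IH] a i //=.
have shift l : a < l -> count P (iota a (l - a)) = P a + count P (iota a.+1 (l - a.+1)).
  by move=> lt_al; have -> : l - a = (l - a.+1).+1 by lia.
case Pa: (P a) => /=; last first.
  by move=> /IH [lt_l Pl cnt]; rewrite shift; [rewrite Pa cnt; split => //; lia | lia].
case: i => [|i] /=; first by rewrite Pa subnn; split => //; lia.
by move=> /IH [lt_l Pl cnt]; rewrite shift; [rewrite Pa cnt; split => //; lia | lia].
Qed.

Lemma size_leq_nth0 (s : seq nat) k : all (fun x => 0 < x) s -> nth 0 s k = 0 -> size s <= k.
Proof.
move=> /allP s_pos sk0; rewrite leqNgt; apply/negP => lt_k.
by have := s_pos _ (mem_nth 0 lt_k); rewrite sk0.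
Qed.

Lemma eq_from_nth0 (s s' : seq nat) : all (fun x => 0 < x) s -> all (fun x => 0 < x) s' ->
  nth 0 s =1 nth 0 s' -> s = s'.
Proof.
move=> s_pos s'_pos E.
have le_ss' : size s <= size s' by apply: size_leq_nth0; rewrite // E nth_default.
have le_s's : size s' <= size s by apply: size_leq_nth0; rewrite // -E nth_default.
by apply: (eq_from_nth (x0 := 0)) => [|t _]; [lia | exact: E].
Qed.

Lemma storable_size (la mu : seq nat) :
  all (fun x => 0 < x) mu -> storable la mu -> size mu <= size la.
Proof.
move=> mu_pos /(_ (size la)) [+ _]; rewrite [nth 0 la _]nth_default // leqn0.
by move/eqP; apply: size_leq_nth0.
Qed.

Lemma storable_size_succ (la mu : seq nat) :
  all (fun x => 0 < x) la -> storable la mu -> size la <= (size mu).+1.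
Proof.
move=> la_pos /(_ (size mu)) [_]; rewrite [nth 0 mu _]nth_default // leqn0.
by move/eqP; apply: size_leq_nth0.
Qed.

Definition positive_prefix (v : nat -> nat) (N : nat) : seq nat :=
  mkseq v (find (fun t => v t == 0) (iota 0 N)).

Section PositivePrefix.
Variables (v : nat -> nat) (N : nat).
Hypothesis v_anti : forall s t, s <= t -> v t <= v s.
Hypothesis vN : v N = 0.

Lemma nth_positive_prefix t : nth 0 (positive_prefix v N) t = v t.
Proof.
rewrite /positive_prefix; set m := find _ _.
have [lt_tm|le_mt] := ltnP t m; first by rewrite nth_mkseq.
rewrite nth_default ?size_mkseq //; apply/esym/eqP; rewrite -leqn0.
have [lt_mN|le_Nm] := ltnP m N; last by rewrite -vN v_anti // (leq_trans le_Nm).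
have has0 : has (fun t => v t == 0) (iota 0 N) by rewrite has_find size_iota.
have := nth_find 0 has0; rewrite -/m nth_iota // add0n => /eqP <-.
exact: v_anti.
Qed.

Lemma positive_prefix_partition : is_partition (positive_prefix v N).
Proof.
apply/andP; split.
  by apply: homo_sorted; [move=> s t /= /v_anti | exact: iota_sorted].
apply/allP => x /mapP [t]; rewrite mem_iota => /andP [_ lt_t] ->.
have lt_tN : t < N by rewrite -[N](size_iota 0) (leq_trans lt_t) ?find_size.
by have := before_find 0 lt_t; rewrite nth_iota // add0n lt0n => ->.
Qed.
End PositivePrefix.

(** * The diagonals of lambda(c) *)

Section Diagonals.
Variables (n : nat) (c : 'S_n.+1).
Hypothesis n_gt0 : 0 < n.
Hypothesis inR_compl : forall x, 1 <= x <= n.+1 -> inR c x = ~~ inL c x.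
Hypothesis L_1 : inL c 1.
Hypothesis R_last : inR c n.+1.

Local Notation la := (lambda_c c).

Definition nL x := count (inL c) (iota 1 x).
Definition nR := count (inR c) (iota 1 n.+1).
Definition diag_col k := nR + nL k - k.

Lemma nLS x : nL x.+1 = nL x + inL c x.+1.
Proof. by rewrite /nL iota1S -cats1 count_cat /= addn0. Qed.

Lemma nL_le x : nL x <= x.
Proof. by rewrite /nL -[X in _ <= X](size_iota 1 x) count_size. Qed.

Lemma nL_lipschitz x y : x <= y -> nL x <= nL y <= nL x + (y - x).
Proof.
move/subnKC => {1 2}<-; elim: (y - x) => [|d IH]; first by rewrite !addn0 leqnn.
by rewrite addnS nLS; case: (inL c _) => /=; lia.
Qed.

Lemma nL_mono x y : x <= y -> nL x <= nL y.
Proof. by move/nL_lipschitz => /andP []. Qed.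

Lemma count_inR_nL x : x <= n.+1 -> count (inR c) (iota 1 x) + nL x = x.
Proof.
move=> le_x; rewrite /nL -(eq_in_count (a1 := predC (inL c))); last first.
  by move=> z; rewrite mem_iota => z_in /=; rewrite inR_compl //; lia.
by rewrite addnC count_predC size_iota.
Qed.

Lemma nR_nL : nR + nL n.+1 = n.+1.
Proof. exact: count_inR_nL. Qed.

Lemma inL_last : inL c n.+1 = false.
Proof. by move: R_last; rewrite inR_compl ?leqnn //; case: (inL c _). Qed.

Lemma nL_last : nL n.+1 = nL n.
Proof. by rewrite nLS inL_last addn0. Qed.

Lemma nL_bounds k : k <= n.+1 -> nL k <= k <= nR + nL k.
Proof.
move=> le_k; rewrite nL_le /=.
have := count_inR_nL le_k; have := nR_nL.
have : count (inR c) (iota 1 k) <= nR by rewrite /nR -(subnKC le_k) iotaD count_cat leq_addr.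
lia.
Qed.

Lemma diag_col_gt0 k : k <= n -> 0 < diag_col k.
Proof.
move=> le_k; have /andP [_] := nL_lipschitz le_k.
by rewrite /diag_col; have := nR_nL; rewrite nL_last; lia.
Qed.

Lemma count_inR_gt l : l <= n.+1 ->
  count (fun r => inR c r && (l < r)) (iota 1 n.+1) = nR - (l - nL l).
Proof.
move=> le_l; have := count_inR_nL le_l.
rewrite /nR -(subnKC le_l) iotaD !count_cat add1n.
rewrite (@eq_in_count _ (fun r => inR c r && (l < r)) pred0 (iota 1 l)); last first.
  by move=> z; rewrite mem_iota add1n ltnS => /andP [_ le_zl] /=; rewrite ltnNge le_zl andbF.
rewrite (@eq_in_count _ (fun r => inR c r && (l < r)) (inR c) (iota l.+1 _)); last first.
  by move=> z; rewrite mem_iota => /andP [lt_lz _] /=; rewrite lt_lz andbT.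
rewrite count_pred0 add0n; move: (count _ (iota 1 l)) (count _ (iota l.+1 _)) => A B.
lia.
Qed.

Lemma size_lambda : size la = nL n.+1.
Proof. by rewrite size_map size_filter. Qed.

Lemma nth_Lseq i : i < nL n.+1 ->
  [/\ 1 <= nth 0 (Lseq c) i <= n.+1, nL (nth 0 (Lseq c) i) = i.+1,
      nL (nth 0 (Lseq c) i).-1 = i & nth 0 la i = nR - (nth 0 (Lseq c) i - i.+1)].
Proof.
move=> lt_i; have [bnd_l Ll cnt_l] := nth_filter_iota lt_i.
rewrite -/(Lseq c) in bnd_l Ll cnt_l *; set l := nth 0 (Lseq c) i in bnd_l Ll cnt_l *.
have nLl1 : nL l.-1 = i by rewrite -cnt_l subn1.
have l_gt0 : 0 < l by lia.
have nLl : nL l = i.+1 by rewrite -(prednK l_gt0) nLS prednK // nLl1 Ll addn1.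
split => //.
rewrite (nth_map 0); last by rewrite size_filter.
by rewrite count_inR_gt -/l ?nLl //; lia.
Qed.

Lemma lambda_sorted : sorted geq la.
Proof.
apply: (homo_sorted (e := leq)).
  by move=> x y le_xy; apply: sub_count => r /andP [-> lt_yr]; apply: leq_ltn_trans lt_yr.
by apply: sorted_filter; [exact: leq_trans | exact: iota_sorted].
Qed.

Lemma lambda_head : nth 0 la 0 = nR.
Proof.
have Lseq_head : Lseq c = 1 :: behead (Lseq c) by rewrite /Lseq /= L_1.
rewrite /lambda_c (nth_map 0) Lseq_head // count_inR_gt //=.
by rewrite /nL /= L_1 subn0.
Qed.

Lemma in_FerE i j : in_Fer la i j =
  [&& 0 < i, 0 < j, j < nR + i, nR + i - j <= n & i <= nL (nR + i - j)].
Proof.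
rewrite /in_Fer; case: (posnP i) => [->|i_gt0] //=; case: (posnP j) => [->|j_gt0] //=.
have nRnL := nR_nL; have [lt_i|ge_i] := ltnP i.-1 (size la); last first.
  rewrite nth_default // leqNgt j_gt0; rewrite size_lambda in ge_i.
  apply/esym/and3P => [[_ le_k le_i]].
  by have := nL_mono (leqW le_k); lia.
rewrite size_lambda in lt_i; have [bnd_l nLl nLl1 ->] := nth_Lseq lt_i.
set l := nth 0 (Lseq c) i.-1 in bnd_l nLl nLl1 *; rewrite prednK // in nLl.
have le_il : i <= l by rewrite -[X in X <= _]nLl nL_le.
apply/idP/and3P => [le_j | [lt_j le_k le_i]].
  have le_lk : l <= nR + i - j by lia.
  by have := nL_mono le_lk; rewrite nLl; split; lia.
have le_lk : l <= nR + i - j.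
  rewrite leqNgt; apply/negP => lt_kl.
  by have := nL_mono (_ : nR + i - j <= l.-1); rewrite nLl1; lia.
lia.
Qed.

Lemma in_Fer_diag k t : k <= n.+1 ->
  in_Fer la (nL k - t) (diag_col k - t) = [&& 0 < k, k <= n, t < nL k & t < diag_col k].
Proof.
move=> le_k; have /andP [le_nLk le_k_nRnL] := nL_bounds le_k.
rewrite in_FerE /diag_col.
have [/andP [lt_t lt_t']|] := boolP ((t < nL k) && (t < nR + nL k - k)); last first.
  by rewrite negb_and !andbF => /orP [] ?; apply/negbTE; rewrite negb_and; lia.
have -> : nR + (nL k - t) - (nR + nL k - k - t) = k by lia.
by rewrite andbT; apply/and5P/andP => [[? ? ? ? ?] | [? ?]]; split; lia.
Qed.

Lemma delta_kE k : 0 < k <= n -> delta_k la k = minn (nL k) (diag_col k).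
Proof.
move=> /andP [k_gt0 le_kn]; have /andP [le_nLk le_k_nRnL] := nL_bounds (leqW le_kn).
have dc_gt0 := diag_col_gt0 le_kn.
apply/eqP; rewrite eqn_leq; apply/andP; split.
  apply/bigmax_leqP => i _; apply/bigmax_leqP => j /eqP diag_ij.
  have : in_Fer la i.+1 j.+1 by rewrite /in_Fer /=; exact: ltn_ord.
  rewrite in_FerE -diag_ij /diag_index lambda_head => /and5P [_ _ lt_j _].
  by rewrite /diag_col; lia.
have nLk_gt0 : 0 < nL k by have := nL_mono k_gt0; rewrite /nL /= L_1.
have lt_row : (nL k).-1 < size la.
  by rewrite size_lambda; have := nL_mono (leqW le_kn); lia.
have lt_col : (diag_col k).-1 < nth 0 la (Ordinal lt_row).
  have := in_Fer_diag 0 (leqW le_kn); rewrite !subn0 k_gt0 le_kn nLk_gt0 dc_gt0 /=.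
  by move=> /andP [_]; rewrite prednK.
apply: (bigmax_sup (Ordinal lt_row)) => //; apply: (bigmax_sup (Ordinal lt_col)) => /=.
  by rewrite /diag_index lambda_head; rewrite /diag_col in dc_gt0 *; apply/eqP; lia.
by rewrite !prednK.
Qed.

Lemma Phi_cE pi i j : in_Fer la i j ->
  Phi_c c pi i j = nth 0 (pi_at pi (nR + i - j)) (nL (nR + i - j) - i).
Proof.
move=> F; rewrite /Phi_c F /box_k /box_delta /diag_index lambda_head.
move: F; rewrite in_FerE => /and5P [i_gt0 j_gt0 lt_j le_k le_i].
rewrite delta_kE /diag_col; last by apply/andP; split; lia.
by congr nth; lia.
Qed.

Lemma Phi_c_diag pi k t : k <= n.+1 ->
  Phi_c c pi (nL k - t) (diag_col k - t) =
  if [&& 0 < k, k <= n, t < nL k & t < diag_col k] then nth 0 (pi_at pi k) t else 0.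
Proof.
move=> le_k; rewrite -in_Fer_diag //; case: ifP => [F|F]; last by rewrite /Phi_c F.
move: (F); rewrite in_Fer_diag // Phi_cE // => /and4P [k_gt0 le_kn lt_t lt_t'].
have /andP [_ le_k_nRnL] := nL_bounds le_k.
have -> : nR + (nL k - t) - (diag_col k - t) = k by rewrite /diag_col in lt_t' *; lia.
by congr nth; lia.
Qed.

Definition adj_storable (pi : n.-tuple (seq nat)) k :=
  if inL c k.+1 then storable (pi_at pi k.+1) (pi_at pi k)
  else storable (pi_at pi k) (pi_at pi k.+1).

Lemma head_Lseq : head 0 (Lseq c) = 1.
Proof. by rewrite /Lseq /= L_1. Qed.

Lemma last_Rseq : last 0 (Rseq c) = n.+1.
Proof. by rewrite /Rseq iota1S filter_rcons R_last last_rcons. Qed.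

Lemma in_STP pi : in_ST c pi <->
  (forall k, 1 <= k <= n -> is_partition (pi_at pi k)) /\
  (forall k, k <= n -> adj_storable pi k).
Proof.
split=> [[parts [st_at _]] | [parts adj]].
  split=> // k le_kn; rewrite /adj_storable.
  have [->|k_gt0] := posnP k.
    have [_ [_ [st_mp st_mm]]] := st_at 1 (n_gt0 : 1 <= 1 <= n); rewrite L_1 /= in st_mp st_mm *.
    by case: (inR c 2) st_mp st_mm => [_ st | st _]; have [] := st isT isT.
  have le1kn : 1 <= k <= n by apply/andP.
  have /= := st_at k le1kn; rewrite inR_compl; last lia.
  case: (inL c k) (inL c k.+1) => [] [] /= [st_pp [st_pm [st_mp st_mm]]].
  - exact: (st_mp isT isT).2.
  - exact: (st_mm isT isT).2.
  - exact: (st_pp isT isT).2.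
  - exact: (st_pm isT isT).2.
split=> //; split=> [i /andP [i_gt0 le_in] /= | k /andP [k_gt0 le_kn]]; last first.
  by rewrite head_Lseq last_Rseq k_gt0 (leq_trans le_kn).
have := adj i.-1 (leq_trans (leq_pred i) le_in); have := adj i le_in.
rewrite /adj_storable prednK // inR_compl; last lia.
by case: (inL c i) (inL c i.+1) => [] [] /= st_right st_left; do !split => // _ _.
Qed.

Lemma adj_storable_down pi k i : adj_storable pi k -> i < nL k.+1 ->
  nth 0 (pi_at pi k) (nL k - i) <= nth 0 (pi_at pi k.+1) (nL k.+1 - i.+1).
Proof.
rewrite /adj_storable nLS; case: (inL c k.+1) => /= st lt_i.
  by rewrite addn1 subSS; exact: (st _).1.
by rewrite addn0 in lt_i *; rewrite -(subnSK lt_i); exact: (st _).2.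
Qed.

Lemma adj_storable_left pi k i : adj_storable pi k -> i <= nL k ->
  nth 0 (pi_at pi k.+1) (nL k.+1 - i) <= nth 0 (pi_at pi k) (nL k - i).
Proof.
rewrite /adj_storable nLS; case: (inL c k.+1) => /= st le_i.
  by rewrite addn1 subSn //; exact: (st _).2.
by rewrite addn0; exact: (st _).1.
Qed.

Lemma Phi_c_RPP pi : in_ST c pi -> is_RPP la (Phi_c c pi).
Proof.
move=> /in_STP [_ adj]; apply: is_RPP_adj lambda_sorted _ _ _.
- by move=> i j; rewrite /Phi_c => /negbTE ->.
- move=> i j F; have [->|i_gt0] := posnP i; first by rewrite /Phi_c /in_Fer.
  have F' : in_Fer la i j.
    by apply: (in_Fer_down lambda_sorted F); move: F => /andP [/andP [_ ?] _]; lia.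
  rewrite !Phi_cE //; move: F F'; rewrite !in_FerE.
  move=> /and5P [_ _ _ le_k' le_i'] /and5P [_ _ lt_j _ _].
  have Ek : nR + i.+1 - j = (nR + i - j).+1 by lia.
  rewrite Ek in le_k' le_i' *.
  by apply: adj_storable_down => //; apply: adj; lia.
- move=> i j F; have [->|j_gt0] := posnP j; first by rewrite /Phi_c /in_Fer andbF.
  have F' : in_Fer la i j.
    by apply: (in_Fer_down lambda_sorted F); move: F => /andP [/andP [? _] _]; lia.
  rewrite !Phi_cE //; move: F; rewrite in_FerE => /and5P [_ _ lt_j le_k le_i].
  have -> : nR + i - j = (nR + i - j.+1).+1 by lia.
  by apply: adj_storable_left => //; apply: adj; lia.
Qed.

Lemma pi_at_pos pi k : in_ST c pi -> all (fun x => 0 < x) (pi_at pi k).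
Proof.
case=> parts _; have [->//|k_gt0] := posnP k.
have [le_kn|lt_nk] := leqP k n.
  by have /andP [_ ->] := parts k (introT andP (conj k_gt0 le_kn)).
by rewrite /pi_at; case: k k_gt0 lt_nk => // k _ lt_nk; rewrite nth_default // size_tuple.
Qed.

Lemma size_pi_at_nL pi k : in_ST c pi -> k <= n.+1 -> size (pi_at pi k) <= nL k.
Proof.
move=> st; have /in_STP [_ adj] := st.
elim: k => [//|k IH] lt_k; have := IH (ltnW lt_k); have := adj k lt_k.
rewrite /adj_storable nLS; case: (inL c k.+1) => /= st_k le_k; rewrite -/(pi_at pi k.+1) in st_k *.
  by have := storable_size_succ (pi_at_pos k.+1 st) st_k; lia.
by have := storable_size (pi_at_pos k.+1 st) st_k; lia.
Qed.

Lemma size_pi_at_diag_col pi k : in_ST c pi -> k <= n.+1 -> size (pi_at pi k) <= diag_col k.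
Proof.
move=> st; have /in_STP [_ adj] := st.
move=> le_k; rewrite -(subKn le_k); elim: (n.+1 - k) (leq_subr k n.+1) => [|d IH] le_d.
  by rewrite subn0 /pi_at nth_default // size_tuple.
have Ek : n.+1 - d = (n - d).+1 by lia.
rewrite Ek in IH; have {IH}IH := IH (ltnW le_d).
have -> : n.+1 - d.+1 = n - d by lia.
have le_k' : n - d <= n := leq_subr d n.
have := diag_col_gt0 le_k'; have /andP [_ le_nRnL] := nL_bounds (leqW le_k').
have := adj _ le_k'; rewrite /adj_storable /diag_col nLS in IH *.
case: (inL c (n - d).+1) IH => /= IH st_k dc_gt0; rewrite -/(pi_at pi (n - d).+1) in IH st_k.
  by have := storable_size (pi_at_pos (n - d) st) st_k; lia.
by have := storable_size_succ (pi_at_pos (n - d) st) st_k; lia.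
Qed.

Lemma nth_pi_at_Phi_c pi k t : in_ST c pi -> 0 < k <= n ->
  nth 0 (pi_at pi k) t = Phi_c c pi (nL k - t) (diag_col k - t).
Proof.
move=> st /andP [k_gt0 le_kn]; rewrite Phi_c_diag ?(leqW le_kn) // k_gt0 le_kn /=.
case: ifP => // /negbT; rewrite negb_and -!leqNgt => /orP [] le; apply: nth_default.
  exact: leq_trans (size_pi_at_nL st (leqW le_kn)) le.
exact: leq_trans (size_pi_at_diag_col st (leqW le_kn)) le.
Qed.

Lemma Phi_c_inj pi pi' : in_ST c pi -> in_ST c pi' -> Phi_c c pi = Phi_c c pi' -> pi = pi'.
Proof.
move=> st st' E; apply: eq_from_tnth => i; rewrite !(tnth_nth [::]).
have le_i : 0 < i.+1 <= n by exact: ltn_ord.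
apply: (eq_from_nth0 (pi_at_pos i.+1 st) (pi_at_pos i.+1 st')) => t.
change (nth 0 (pi_at pi i.+1) t = nth 0 (pi_at pi' i.+1) t).
by rewrite !nth_pi_at_Phi_c // E.
Qed.

Section ReadDiagonals.
Variable f : nat -> nat -> nat.
Hypothesis f_RPP : is_RPP la f.

Definition diag_value k t := f (nL k - t) (diag_col k - t).

Lemma diag_value_out k t : k <= n.+1 ->
  ~~ [&& 0 < k, k <= n, t < nL k & t < diag_col k] -> diag_value k t = 0.
Proof. by move=> le_k out; rewrite /diag_value f_RPP.1 // in_Fer_diag. Qed.

Lemma diag_value_anti k s t : k <= n.+1 -> s <= t -> diag_value k t <= diag_value k s.
Proof.
move=> le_k le_st; apply: RPP_le f_RPP _ _ _; rewrite ?leq_sub2l // !in_Fer_diag //.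
by move=> /and4P [-> -> lt_t lt_t']; rewrite (leq_ltn_trans le_st lt_t) (leq_ltn_trans le_st lt_t').
Qed.

Definition read_diagonals : n.-tuple (seq nat) :=
  [tuple positive_prefix (diag_value i.+1) (nL i.+1) | i < n].

Lemma nth_pi_at_read_diagonals k t : k <= n.+1 -> nth 0 (pi_at read_diagonals k) t = diag_value k t.
Proof.
move=> le_k; have [->|k_gt0] := posnP k; first by rewrite diag_value_out ?nth_nil.
have [le_kn|lt_nk] := leqP k n; last first.
  have -> : k = n.+1 by lia.
  by rewrite /pi_at [nth [::] _ _]nth_default ?size_tuple // nth_nil diag_value_out // ltnn andbF.
have lt_k1 : k.-1 < n by lia.
rewrite -(prednK k_gt0) /pi_at (nth_mktuple _ _ (Ordinal lt_k1)) /= prednK //.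
apply: nth_positive_prefix => [s' t' |]; first exact: diag_value_anti.
by rewrite diag_value_out // ltnn !andbF.
Qed.

Lemma adj_storable_read_diagonals k : k <= n -> adj_storable read_diagonals k.
Proof.
move=> le_kn; have /andP [le_nLk le_k_nRnL] := nL_bounds (leqW le_kn).
have dc_gt0 := diag_col_gt0 le_kn.
have lt_kn : inL c k.+1 -> k < n.
  by rewrite ltn_neqAle le_kn andbT; apply: contraTneq => ->; rewrite inL_last.
have k_gt0 : ~~ inL c k.+1 -> 0 < k by rewrite lt0n; apply: contra => /eqP ->.
have k_last : k < n \/ nR + nL k = n.+1.
  by case: (ltngtP k n) le_kn => [|//|-> _]; [left | right; rewrite -nL_last nR_nL].
rewrite /adj_storable /diag_value.
case: (inL c k.+1) lt_kn k_gt0 (nLS k) => [/(_ isT) lt_kn _ | _ /(_ isT) k_gt0] nLk1 t;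
  rewrite /= in nLk1; rewrite !nth_pi_at_read_diagonals ?(leqW le_kn) //;
  split; apply: RPP_le f_RPP _ _ _;
  rewrite ?in_Fer_diag ?(leqW le_kn) // /diag_col nLk1 in dc_gt0 *;
  try lia; by move=> /and4P [*]; apply/and4P; split; lia.
Qed.

Lemma read_diagonals_in_ST : in_ST c read_diagonals.
Proof.
apply/in_STP; split; last exact: adj_storable_read_diagonals.
move=> k /andP [k_gt0 le_kn]; rewrite -(prednK k_gt0) /pi_at.
have lt_k1 : k.-1 < n by lia.
rewrite (nth_mktuple _ _ (Ordinal lt_k1)) /= prednK //.
by apply: positive_prefix_partition => s t; apply: diag_value_anti; lia.
Qed.

Lemma Phi_c_read_diagonals : Phi_c c read_diagonals = f.
Proof.
apply: functional_extensionality => i; apply: functional_extensionality => j.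
have [F|F] := boolP (in_Fer la i j); last by rewrite /Phi_c (negbTE F) f_RPP.1.
move: (F); rewrite in_FerE => /and5P [i_gt0 j_gt0 lt_j le_k le_i].
rewrite Phi_cE // nth_pi_at_read_diagonals /diag_value; last lia.
by congr f; rewrite /diag_col; lia.
Qed.
End ReadDiagonals.
End Diagonals.

Theorem theorem4p11 (n : nat) (c : 'S_(n.+1)) :
  0 < n -> coxeter_element c ->
  (forall pi, in_ST c pi -> is_RPP (lambda_c c) (Phi_c c pi)) /\
  (forall pi pi', in_ST c pi -> in_ST c pi' -> Phi_c c pi = Phi_c c pi' -> pi = pi') /\
  (forall f, is_RPP (lambda_c c) f -> exists pi, in_ST c pi /\ Phi_c c pi = f).
Proof.
move=> n_gt0 /coxeter_element_porbit c_cycle.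
have inR_compl := inR_inL n_gt0 c_cycle.
have L_1 := inL_1 n_gt0 c_cycle.
have R_last := inR_last n_gt0 c_cycle.
split; [|split].
- exact: (Phi_c_RPP n_gt0 inR_compl L_1 R_last).
- exact: (Phi_c_inj n_gt0 inR_compl L_1 R_last).
- move=> f f_RPP; exists (read_diagonals c f); split.
    exact: (read_diagonals_in_ST n_gt0 inR_compl L_1 R_last f_RPP).
  exact: (Phi_c_read_diagonals n_gt0 inR_compl L_1 R_last f_RPP).
Qed.
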